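(* The uniform matroid $U_{2,4}$ (ground set of 4 elements, bases = all 2-element subsets) is not BUMAC; that is, there is no binary MAC $W$ with 4 users such that $I(X[S];Y,X[S^c])$ equals the rank function of $U_{2,4}$ on $\{1,2,3,4\}$ (namely $\min(|S|,2)$) for all $S\subseteq\{1,2,3,4\}$.
   Context: A binary MAC with $m$ users is a channel $W$ with input alphabet $\mathbb{F}_2^m$ and finite output alphabet $\mathcal{Y}$. Let $E_m=\{1,\dots,m\}$, let $X[E_m]$ have i.i.d. uniform components on $\mathbb{F}_2$, and let $Y$ be the output of $W$ with input $X[E_m]$. For $S\subseteq E_m$, $X[S]=(X[i])_{i\in S}$, $S^c=E_m\setminus S$. Mutual information is in bits. A matroid is BUMAC if it is isomorphic to the matroid on $E_m$ with rank function $S\mapsto I(X[S];Y,X[S^c])$ for some binary MAC $W$. *)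

From mathcomp Require Import all_boot all_order all_algebra.
From mathcomp Require Import reals exp.
Set Implicit Arguments. Unset Strict Implicit. Unset Printing Implicit Defensive.
Import Order.TTheory GRing.Theory Num.Theory.
Local Open Scope ring_scope.

Section InfoTheory.
Variable R : realType.

Definition log2 (x : R) : R := ln x / ln 2.

Variables (Omega : finType) (P : Omega -> R).

Definition joint (A B : eqType) (f : Omega -> A) (g : Omega -> B) (a : A) (b : B) : R :=
  \sum_(w : Omega | (f w == a) && (g w == b)) P w.
Definition law (A : eqType) (f : Omega -> A) (a : A) : R :=
  \sum_(w : Omega | f w == a) P w.

Definition mutual_info (A B : finType) (f : Omega -> A) (g : Omega -> B) : R :=
  \sum_(a : A) \sum_(b : B)
     let pab := joint f g a b in
     if pab == 0 then 0 else pab * log2 (pab / (law f a * law g b)).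
End InfoTheory.

(* Inputs of a binary MAC with m users: vectors in F_2^m, indexed by 'I_m. *)
Definition input (m : nat) := {ffun 'I_m -> bool}.

(* W is a binary MAC with m users and finite output alphabet Y:
   W x y = W(y|x) is a transition probability. *)
Definition is_MAC (R : realType) (m : nat) (Y : finType) (W : input m -> Y -> R) : Prop :=
  (forall x y, 0 <= W x y) /\ (forall x, \sum_(y : Y) W x y = 1).

(* Sample space: (X[E_m], Y) with X uniform i.i.d. on F_2^m and Y ~ W(.|X). *)
Definition MAC_prob (R : realType) (m : nat) (Y : finType) (W : input m -> Y -> R)
  (w : input m * Y) : R := W w.1 w.2 / (2 ^+ m).

(* X[S] encoded as the restriction of x to S (coordinates outside S set to false). *)
Definition restr (m : nat) (S : {set 'I_m}) (x : input m) : input m :=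
  [ffun i => if i \in S then x i else false].

Definition MAC_rank (R : realType) (m : nat) (Y : finType) (W : input m -> Y -> R)
  (S : {set 'I_m}) : R :=
  mutual_info (MAC_prob W)
    (fun w : input m * Y => restr S w.1)
    (fun w : input m * Y => (w.2, restr (~: S) w.1)).

(* Since [I(X[S]; Y, X[S^c]) = H(X[S]) - H(X[S] | Y, X[S^c])] and [H(X[S]) <= |S|],
   rank 2 on the complement of a pair {k, l} forces [H(X[S] | Y, X_k, X_l) = 0]: the
   output together with two coordinates determines the input.  So two inputs that can
   produce the same output agree in at most one coordinate; as two of any three vectors
   of F_2^4 agree in two coordinates (pigeonhole over the four coordinates), each output
   has at most two possible inputs.  Then [H(X | Y) <= 1] and [I(X; Y) >= 4 - 1 = 3],
   whereas the rank of the full ground set is 2. *)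

From mathcomp Require Import all_boot all_order all_algebra.
From mathcomp Require Import reals exp ring lra.
Set Implicit Arguments. Unset Strict Implicit. Unset Printing Implicit Defensive.
Import Order.TTheory GRing.Theory Num.Theory.
Local Open Scope ring_scope.

Section Log2.
Variable R : realType.
Implicit Types p q a m x y : R.

Lemma ln2_gt0 : 0 < ln (2 : R).
Proof. by apply: ln_gt0; rewrite ltr1n. Qed.

Lemma ler_log2 : {in Num.pos &, {mono @log2 R : x y / x <= y}}.
Proof. by move=> x y xp yp; rewrite /log2 ler_pM2r ?invr_gt0 ?ln2_gt0 // ler_ln. Qed.

Lemma log2_exp2 n : log2 (2 ^+ n : R) = n%:R.
Proof. by rewrite /log2 lnXn // -[_ *+ n]mulr_natl mulfK // gt_eqF ?ln2_gt0. Qed.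

Lemma log2V : {in Num.pos, {morph @log2 R : x / x^-1 >-> - x}}.
Proof. by move=> x xp; rewrite /log2 lnV // mulNr. Qed.

Lemma log2_div : {in Num.pos &, {morph @log2 R : x y / x / y >-> x - y}}.
Proof. by move=> x y xp yp; rewrite /log2 ln_div // mulrBl. Qed.

Lemma ln_le_subr1 x : 0 < x -> ln x <= x - 1.
Proof.
by move=> x0; have := @le_ln1Dx R (x - 1); rewrite addrCA subrr addr0; apply; lra.
Qed.

Definition plog2 p q := if p == 0 then 0 else p * log2 (p / q).

Lemma plog20 q : plog2 0 q = 0.
Proof. by rewrite /plog2 eqxx. Qed.

Lemma plog2_le0 p q : 0 <= p <= q -> plog2 p q <= 0.
Proof.
rewrite /plog2; case: eqP => // /eqP p0 /andP[pge0 pleq].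
have pgt0 : 0 < p by rewrite lt_def p0.
have qgt0 : 0 < q := lt_le_trans pgt0 pleq.
rewrite pmulr_rle0 // /log2 pmulr_lle0 ?invr_gt0 ?ln2_gt0 //.
by rewrite ln_le0 // ler_pdivrMr // mul1r.
Qed.

Lemma plog2M p a q : 0 < p -> 0 < a -> 0 < q ->
  plog2 p (a * q) = plog2 p q - p * log2 a.
Proof.
move=> p0 a0 q0; rewrite /plog2 gt_eqF // -mulrBr; congr (_ * _).
rewrite /log2 -mulrBl invfM mulrCA ln_div ?posrE ?mulr_gt0 ?divr_gt0 ?invr_gt0 //.
by rewrite lnM ?posrE ?invr_gt0 ?divr_gt0 // lnV ?posrE // ln_div ?posrE //; lra.
Qed.

Lemma plog2_eq0 p q : 0 < p -> 0 < q -> (plog2 p q == 0) = (p == q).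
Proof.
move=> p0 q0; rewrite /plog2 (gt_eqF p0) mulf_eq0 (gt_eqF p0) /= /log2 mulf_eq0.
rewrite invr_eq0 (gt_eqF ln2_gt0) orbF ln_eq0 ?divr_gt0 //.
by rewrite -(inj_eq (mulIf (lt0r_neq0 q0))) divfK ?mul1r // lt0r_neq0.
Qed.

(* From [ln y <= y - 1] at [y = q / (m p)]. *)
Lemma oppr_plog2_le p q m : 0 < p -> 0 < q -> 0 < m ->
  - plog2 p q <= p * log2 m + (q / m - p) / ln 2.
Proof.
move=> p0 q0 m0; rewrite /plog2 (gt_eqF p0) /log2.
have y0 : 0 < q / (m * p) by rewrite divr_gt0 ?mulr_gt0.
have key : p * (ln q - ln m - ln p) <= q / m - p.
  have := ler_wpM2l (ltW p0) (@ln_le_subr1 _ y0).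
  rewrite ln_div ?posrE ?mulr_gt0 // lnM ?posrE // opprD addrA.
  by congr (_ <= _); field; rewrite !gt_eqF.
rewrite ln_div ?posrE ?divr_gt0 //.
have := ln2_gt0; set l := ln 2 => l0.
rewrite -subr_le0.
set d := _ - _; have -> : d = (p * (ln q - ln m - ln p) - (q / m - p)) / l.
  by rewrite /d; field; rewrite !gt_eqF.
by rewrite pmulr_lle0 ?invr_gt0 // subr_le0.
Qed.

End Log2.

Section Entropy.
Variables (R : realType) (T : finType) (P : T -> R).
Hypothesis P_ge0 : forall w, 0 <= P w.
Hypothesis P_sum1 : \sum_w P w = 1.

Definition entropy (A : finType) (f : T -> A) : R :=
  - \sum_a plog2 (law P f a) 1.

Definition cond_entropy (A B : finType) (f : T -> A) (g : T -> B) : R :=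
  - \sum_a \sum_b plog2 (joint P f g a b) (law P g b).

Lemma law_ge0 (C : eqType) (h : T -> C) c : 0 <= law P h c.
Proof. by apply: sumr_ge0 => w _; apply: P_ge0. Qed.

Lemma law_neq0P (C : eqType) (h : T -> C) c :
  law P h c != 0 -> exists2 w, h w = c & 0 < P w.
Proof.
move=> lawc.
case: (pickP (fun w => (h w == c) && (0 < P w))) => [w /andP[/eqP hw Pw]|none].
  by exists w.
move: lawc; rewrite /law big1 ?eqxx // => w hw.
apply/eqP; rewrite eq_le P_ge0 andbT leNgt.
by move: (none w) => /=; rewrite hw /= => ->.
Qed.

Lemma sum_law (C : finType) (h : T -> C) : \sum_c law P h c = 1.
Proof. by rewrite -P_sum1 (partition_big h predT). Qed.

Variables (A B : finType) (f : T -> A) (g : T -> B).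

Lemma jointE a b : joint P f g a b = law P (fun w => (f w, g w)) (a, b).
Proof. by apply: eq_bigl => w; rewrite xpair_eqE. Qed.

Lemma joint_ge0 a b : 0 <= joint P f g a b.
Proof. by rewrite jointE law_ge0. Qed.

Lemma sum_joint_r a : \sum_b joint P f g a b = law P f a.
Proof. by rewrite /law (partition_big g predT). Qed.

Lemma sum_joint_l b : \sum_a joint P f g a b = law P g b.
Proof.
rewrite /law (partition_big f predT) //; apply: eq_bigr => a _.
by apply: eq_bigl => w; rewrite andbC.
Qed.

Lemma P_le_joint w : P w <= joint P f g (f w) (g w).
Proof.
rewrite /joint (bigD1 w) ?eqxx //= lerDl sumr_ge0 // => ? _; exact: P_ge0.
Qed.

Lemma joint_le_law_l a b : joint P f g a b <= law P f a.
Proof.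
by rewrite -sum_joint_r (bigD1 b) //= lerDl sumr_ge0 // => ? _; apply: joint_ge0.
Qed.

Lemma joint_le_law_r a b : joint P f g a b <= law P g b.
Proof.
by rewrite -sum_joint_l (bigD1 a) //= lerDl sumr_ge0 // => ? _; apply: joint_ge0.
Qed.

Lemma mutual_info_entropy : mutual_info P f g = entropy f - cond_entropy f g.
Proof.
transitivity (\sum_a \sum_b plog2 (joint P f g a b) (law P f a * law P g b)) => //.
rewrite /entropy /cond_entropy opprK addrC -sumrN -big_split /=.
apply: eq_bigr => a _.
have -> : plog2 (law P f a) 1 = \sum_b joint P f g a b * log2 (law P f a).
  by rewrite -mulr_suml sum_joint_r /plog2 divr1; case: eqP => // ->; rewrite mul0r.
rewrite -sumrN -big_split /=; apply: eq_bigr => b _.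
have [->|j0] := eqVneq (joint P f g a b) 0; first by rewrite !plog20 mul0r oppr0 addr0.
have jgt0 : 0 < joint P f g a b by rewrite lt_def j0 joint_ge0.
by rewrite plog2M ?(lt_le_trans jgt0) ?joint_le_law_l ?joint_le_law_r // addrC.
Qed.

Lemma entropy_ge c : (forall a, law P f a <= c) -> - log2 c <= entropy f.
Proof.
move=> le_c; rewrite /entropy -sumrN -[- log2 c]mul1r.
rewrite -[in X in X <= _](sum_law f) mulr_suml.
apply: ler_sum => a _; rewrite /plog2 divr1.
have [->|la0] := eqVneq (law P f a) 0; first by rewrite mul0r oppr0.
have lgt0 : 0 < law P f a by rewrite lt_def la0 law_ge0.
rewrite -[X in _ <= X]mulrN ler_wpM2l ?law_ge0 // lerN2.
by rewrite ler_log2 ?posrE ?(lt_le_trans lgt0).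
Qed.

Lemma entropy_le c : 0 < c -> (forall w, 0 < P w -> c <= law P f (f w)) ->
  entropy f <= - log2 c.
Proof.
move=> c0 c_le; rewrite /entropy -sumrN -[- log2 c]mul1r.
rewrite -[in X in _ <= X](sum_law f) mulr_suml.
apply: ler_sum => a _; rewrite /plog2 divr1.
have [->|la0] := eqVneq (law P f a) 0; first by rewrite mul0r oppr0.
have [w <- Pw] := law_neq0P la0.
rewrite -[X in X <= _]mulrN ler_wpM2l ?law_ge0 // lerN2.
by rewrite ler_log2 ?posrE ?(lt_le_trans c0) ?c_le.
Qed.

Lemma cond_entropy_ge0 : 0 <= cond_entropy f g.
Proof.
rewrite oppr_ge0; apply: sumr_le0 => a _; apply: sumr_le0 => b _.
by rewrite plog2_le0 // joint_ge0 joint_le_law_r.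
Qed.

Lemma cond_entropy_le_log2 (m : nat) : (0 < m)%N ->
  (forall b, (#|[set a | joint P f g a b != 0%R]| <= m)%N) ->
  cond_entropy f g <= log2 m%:R.
Proof.
move=> m0 fibre; have mgt0 : 0 < m%:R :> R by rewrite ltr0n.
rewrite /cond_entropy exchange_big /= -sumrN.
rewrite -[X in _ <= X]mul1r -{1}(sum_law g) mulr_suml.
apply: ler_sum => b _; set S := [set a | joint P f g a b != 0].
have onS (F : A -> R) : (forall a, joint P f g a b = 0 -> F a = 0%R) ->
    \sum_a F a = \sum_(a in S) F a.
  move=> F0; rewrite [RHS]big_mkcond; apply: eq_bigr => a _; rewrite inE.
  by case: eqP => // /F0.
rewrite -sumrN (onS (fun a => - plog2 _ _)); last by move=> a ->; rewrite plog20 oppr0.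
have lawS : law P g b = \sum_(a in S) joint P f g a b.
  by rewrite -sum_joint_l (onS (fun a => joint P f g a b)).
apply: le_trans (_ : _ <= \sum_(a in S) (joint P f g a b * log2 m%:R +
                  (law P g b / m%:R - joint P f g a b) / ln 2)) _.
  apply: ler_sum => a; rewrite inE => j0.
  have jgt0 : 0 < joint P f g a b by rewrite lt_def j0 joint_ge0.
  by rewrite oppr_plog2_le // (lt_le_trans jgt0) ?joint_le_law_r.
rewrite big_split /= -mulr_suml -lawS -mulr_suml sumrB -lawS sumr_const gerDl.
rewrite pmulr_lle0 ?invr_gt0 ?ln2_gt0 // subr_le0.
rewrite -[_ *+ #|S|]mulr_natr mulrAC ler_pdivrMr //.
by rewrite ler_wpM2l ?law_ge0 // ler_nat fibre.
Qed.

Lemma cond_entropy_eq0 : cond_entropy f g = 0 ->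
  forall w w', 0 < P w -> 0 < P w' -> g w = g w' -> f w = f w'.
Proof.
move=> H0 w w' Pw Pw' gww'.
have terms_ge0 a b : 0 <= - plog2 (joint P f g a b) (law P g b).
  by rewrite oppr_ge0 plog2_le0 // joint_ge0 joint_le_law_r.
have terms0 a b : plog2 (joint P f g a b) (law P g b) = 0.
  have sum0 : \sum_a \sum_b - plog2 (joint P f g a b) (law P g b) = 0.
    by under eq_bigr do rewrite sumrN; rewrite sumrN.
  have inner0 : \sum_b - plog2 (joint P f g a b) (law P g b) = 0.
    by apply: (psumr_eq0P _ sum0) => // a' _; apply: sumr_ge0.
  by apply/eqP; rewrite -oppr_eq0; apply/eqP; apply: (psumr_eq0P _ inner0).
have jgt0 : 0 < joint P f g (f w) (g w) := lt_le_trans Pw (P_le_joint w).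
have /eqP jE : joint P f g (f w) (g w) == law P g (g w).
  by rewrite -plog2_eq0 ?terms0 // (lt_le_trans jgt0) ?joint_le_law_r.
apply/eqP; apply: contraT => neq.
have : joint P f g (f w) (g w) + joint P f g (f w') (g w) <= law P g (g w).
  rewrite -sum_joint_l (bigD1 (f w)) //= lerD2l (bigD1 (f w')) 1?eq_sym //=.
  by rewrite lerDl sumr_ge0 // => *; exact: joint_ge0.
by rewrite jE gerDl leNgt gww' (lt_le_trans Pw' (P_le_joint w')).
Qed.

End Entropy.

Definition agree (I : finType) (x x' : {ffun I -> bool}) := [set i | x i == x' i].

Lemma agree_pigeonhole (I : finType) (x1 x2 x3 : {ffun I -> bool}) : (3 < #|I|)%N ->
  [|| 1 < #|agree x1 x2|, 1 < #|agree x1 x3| | 1 < #|agree x2 x3|]%N.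
Proof.
move=> I_gt3; apply: contraLR I_gt3; rewrite !negb_or -!leqNgt => /and3P[le12 le13 le23].
have cover : agree x1 x2 :|: agree x1 x3 :|: agree x2 x3 = [set: I].
  by apply/setP => i; rewrite !inE; case: (x1 i); case: (x2 i); case: (x3 i).
rewrite -cardsT -cover (leq_trans (leq_card_setU _ _).1) //.
rewrite -[3%N]/(2 + 1)%N leq_add // (leq_trans (leq_card_setU _ _).1) //.
by rewrite -[2%N]/(1 + 1)%N leq_add.
Qed.

Lemma card_le2_of_agree (I : finType) (X : {set {ffun I -> bool}}) : (3 < #|I|)%N ->
  {in X &, forall x x', 1 < #|agree x x'| -> x = x'}%N -> (#|X| <= 2)%N.
Proof.
move=> I_gt3 far; rewrite leqNgt.
apply/card_gt2P => -[x1 [x2 [x3 [[X1 X2 X3] [n12 n23 n31]]]]].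
case/or3P: (agree_pigeonhole x1 x2 x3 I_gt3) => agr.
- by move: n12; rewrite (far _ _ X1 X2 agr) eqxx.
- by move: n31; rewrite (far _ _ X1 X3 agr) eqxx.
- by move: n23; rewrite (far _ _ X2 X3 agr) eqxx.
Qed.

Section Restriction.
Variable m : nat.
Implicit Types (S : {set 'I_m}) (x : input m).

Lemma restr_setT x : restr setT x = x.
Proof. by apply/ffunP => i; rewrite ffunE inE. Qed.

Lemma eq_restr S x x' : {in S, x =1 x'} -> restr S x = restr S x'.
Proof. by move=> eqS; apply/ffunP => i; rewrite !ffunE; case: ifP => // /eqS. Qed.

Lemma restr_inj S x x' :
  restr S x = restr S x' -> restr (~: S) x = restr (~: S) x' -> x = x'.
Proof.
move=> eqS eqSC; apply/ffunP => i.
have /ffunP/(_ i) := eqS; have /ffunP/(_ i) := eqSC; rewrite !ffunE inE.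
by case: (i \in S).
Qed.

End Restriction.

Section MAC.
Variables (R : realType) (m : nat) (Y : finType) (W : input m -> Y -> R).
Hypothesis W_ge0 : forall x y, 0 <= W x y.
Hypothesis W_sum1 : forall x, \sum_y W x y = 1.

Lemma MAC_prob_ge0 w : 0 <= MAC_prob W w.
Proof. by rewrite /MAC_prob divr_ge0 // exprn_ge0. Qed.

Lemma MAC_prob_gt0 w : (0 < MAC_prob W w) = (0 < W w.1 w.2).
Proof. by rewrite /MAC_prob pmulr_lgt0 // invr_gt0 exprn_gt0. Qed.

Lemma law_MAC (A : eqType) (h : input m -> A) a :
  law (MAC_prob W) (fun w => h w.1) a = #|[set x | h x == a]|%:R / 2 ^+ m.
Proof.
rewrite /law /MAC_prob (eq_bigl (fun w => (h w.1 == a) && true)) => [|w];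
  last by rewrite andbT.
rewrite -(pair_big_dep (fun x => h x == a) (fun _ _ => true) (fun x y => W x y / 2 ^+ m)) /=.
rewrite (eq_bigl (fun x => x \in [set x | h x == a])) => [|x]; last by rewrite inE.
under eq_bigr do rewrite -mulr_suml W_sum1 mul1r.
by rewrite sumr_const -[_ *+ #|_|]mulr_natl.
Qed.

Lemma sum_MAC_prob : \sum_w MAC_prob W w = 1.
Proof.
have := law_MAC (fun=> tt) tt; rewrite /law.
have -> : [set x : input m | tt == tt] = setT by apply/setP => x; rewrite !inE.
by rewrite cardsT card_ffun card_bool card_ord natrX divff ?expf_neq0 ?pnatr_eq0.
Qed.

Lemma law_MAC_restr_setT a :
  law (MAC_prob W) (fun w => restr setT w.1) a = (2 ^+ m)^-1.
Proof.
rewrite law_MAC (_ : [set x | restr setT x == a] = [set a]) ?cards1 ?mul1r //.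
by apply/setP => x; rewrite !inE restr_setT.
Qed.

Lemma law_MAC_restr_pair (k l : 'I_m) x0 : k != l ->
  2 ^+ 2 / 2 ^+ m <= law (MAC_prob W) (fun w => restr (~: [set k; l]) w.1)
                                      (restr (~: [set k; l]) x0).
Proof.
move=> kl; rewrite law_MAC ler_pM2r ?invr_gt0 ?exprn_gt0 // -natrX ler_nat.
pose upd (uv : bool * bool) : input m :=
  [ffun i => if i == k then uv.1 else if i == l then uv.2 else x0 i].
have upd_inj : injective upd.
  move=> [u v] [u' v'] /ffunP eq_uv; have := eq_uv k; have := eq_uv l.
  by rewrite !ffunE !eqxx eq_sym (negbTE kl) /= => -> ->.
have <- : #|upd @: [set: bool * bool]| = (2 ^ 2)%N.
  by rewrite card_imset // cardsT card_prod card_bool.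
apply/subset_leq_card/subsetP => _ /imsetP[uv _ ->]; rewrite inE; apply/eqP/eq_restr.
by move=> i; rewrite !inE negb_or ffunE => /andP[/negbTE -> /negbTE ->].
Qed.

Lemma MAC_input_det_pair (k l : 'I_m) : k != l ->
  MAC_rank W (~: [set k; l]) = m%:R - 2 ->
  forall x x' y, 0 < W x y -> 0 < W x' y -> x k = x' k -> x l = x' l -> x = x'.
Proof.
move=> kl rank x x' y Wx Wx' ek el; set S := ~: [set k; l].
have H_le : entropy (MAC_prob W) (fun w => restr S w.1) <= m%:R - 2.
  have c_gt0 : 0 < 2 ^+ 2 / 2 ^+ m :> R by rewrite divr_gt0 ?exprn_gt0.
  have := entropy_le MAC_prob_ge0 sum_MAC_prob c_gt0 (fun w _ => law_MAC_restr_pair w.1 kl).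
  by rewrite log2_div ?posrE ?exprn_gt0 // !log2_exp2 opprB.
have Hc0 : cond_entropy (MAC_prob W) (fun w => restr S w.1)
                        (fun w => (w.2, restr (~: S) w.1)) = 0.
  apply/eqP; rewrite eq_le cond_entropy_ge0 ?andbT //; last exact: MAC_prob_ge0.
  by move: rank; rewrite /MAC_rank mutual_info_entropy //; [lra | exact: MAC_prob_ge0].
have eqSC : restr (~: S) x = restr (~: S) x'.
  by rewrite setCK; apply: eq_restr => i; rewrite !inE => /orP[] /eqP ->.
apply: (restr_inj _ eqSC).
apply: (cond_entropy_eq0 MAC_prob_ge0 Hc0 (w := (x, y)) (w' := (x', y))).
- by rewrite MAC_prob_gt0.
- by rewrite MAC_prob_gt0.
- by rewrite /= eqSC.
Qed.

Lemma MAC_input_det_agree :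
  (forall k l : 'I_m, k != l -> MAC_rank W (~: [set k; l]) = m%:R - 2) ->
  forall x x' y, 0 < W x y -> 0 < W x' y -> (1 < #|agree x x'|)%N -> x = x'.
Proof.
move=> rank x x' y Wx Wx' /card_gt1P[k [l [kx lx kl]]].
by apply: (MAC_input_det_pair kl (rank k l kl) Wx Wx'); apply/eqP;
  [move: kx | move: lx]; rewrite inE.
Qed.

Section FullRank.
Hypothesis agree_det :
  forall x x' y, 0 < W x y -> 0 < W x' y -> (1 < #|agree x x'|)%N -> x = x'.

Lemma card_MAC_fibre_le2 y : (3 < m)%N -> (#|[set x | (0 < W x y)%R]| <= 2)%N.
Proof.
move=> m_gt3; apply: card_le2_of_agree; first by rewrite card_ord.
by move=> x x'; rewrite !inE; apply: agree_det.
Qed.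

Lemma MAC_rank_setT_ge : (3 < m)%N -> m%:R - 1 <= MAC_rank W setT.
Proof.
move=> m_gt3; rewrite /MAC_rank mutual_info_entropy; last exact: MAC_prob_ge0.
have H_ge : m%:R <= entropy (MAC_prob W) (fun w => restr setT w.1).
  have law_le a : law (MAC_prob W) (fun w => restr setT w.1) a <= (2 ^+ m)^-1.
    by rewrite law_MAC_restr_setT.
  have := entropy_ge MAC_prob_ge0 sum_MAC_prob law_le.
  by rewrite log2V ?posrE ?exprn_gt0 // opprK log2_exp2.
have H_le : cond_entropy (MAC_prob W) (fun w => restr setT w.1)
                         (fun w => (w.2, restr (~: setT) w.1)) <= 1.
  have fibre b : (#|[set a | joint (MAC_prob W) (fun w => restr setT w.1)
                       (fun w => (w.2, restr (~: setT) w.1)) a b != 0%R]| <= 2)%N.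
    apply: leq_trans _ (card_MAC_fibre_le2 b.1 m_gt3).
    apply/subset_leq_card/subsetP => a; rewrite !inE jointE.
    case/(law_neq0P MAC_prob_ge0) => w [<- <-]; rewrite MAC_prob_gt0 restr_setT.
    by case: w.
  have := cond_entropy_le_log2 MAC_prob_ge0 sum_MAC_prob (isT : (0 < 2)%N) fibre.
  by have := log2_exp2 R 1; rewrite expr1 => ->.
lra.
Qed.

End FullRank.

End MAC.

Theorem mainTheorem2 (R : realType) :
  ~ exists (Y : finType) (W : input 4 -> Y -> R),
      is_MAC W /\
      forall S : {set 'I_4}, MAC_rank W S = (minn #|S| 2)%:R.
Proof.
move=> [Y [W [[W_ge0 W_sum1] rank]]].
have rank_pair (k l : 'I_4) : k != l -> MAC_rank W (~: [set k; l]) = 4%:R - 2.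
  move=> kl; have := cardsC [set k; l]; rewrite cards2 kl card_ord rank.
  by move=> /(@addnI 2 _ 2) ->; rewrite minnn; lra.
have := MAC_rank_setT_ge W_ge0 W_sum1 (MAC_input_det_agree W_ge0 W_sum1 rank_pair) isT.
by rewrite rank cardsT card_ord /minn /=; lra.
Qed.
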